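(* Let $A\in\mathbb{R}^{n\times n}$ be symmetric positive definite, $\Pi\in\mathbb{R}^{n\times n}$ symmetric positive definite, and $M_0\in\mathbb{R}^{n\times n}$. For $i\ge0$ let $R_i:=I_n-AM_i$, $Z_i:=\Pi R_i$, $G_i:=-\Pi AZ_i$, and for $i\ge1$ let $M_i$ be the matrix with $$M_i\in M_0+\mathcal{K}_i((\Pi A)^2,G_0)\quad\text{and}\quad R_i\perp\mathcal{K}_i((\Pi A)^2,G_0),$$ where $\mathcal{K}_i((\Pi A)^2,G_0)=\mathrm{span}\{G_0,(\Pi A)^2G_0,\dots,(\Pi A)^{2(i-1)}G_0\}$. Define $P_0:=-G_0$ and, for $i\ge1$, $P_i:=-G_i+\beta_iP_{i-1}$ with $\beta_i=\frac{(R_i,G_i)_F}{(R_{i-1},G_{i-1})_F}$. Then for $i=0,1,\dots$, $$M_{i+1}=M_i+\alpha_iP_i,\qquad \alpha_i=-\frac{(R_i,G_i)_F}{(P_i,AP_i)_F},\qquad R_{i+1}=R_i-\alpha_iAP_i.$$ Furthermore, $P_0,\dots,P_{i-1}$ form an $A$-orthogonal basis (i.e. $(P_j,AP_k)_F=0$ for $j\ne k$) of the Krylov subspace, and $$\mathrm{span}\{P_0,\dots,P_{i-1}\}=\mathrm{span}\{G_0,\dots,G_{i-1}\}=\mathcal{K}_i((\Pi A)^2,G_0).$$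
   Context: The Frobenius inner product is $(X,Y)_F=\operatorname{tr}(X^TY)$, and $\perp$ denotes orthogonality with respect to it. It is assumed that the iteration does not break down (the iterates are uniquely determined and $R_i\neq0$, $P_i\neq0$ for all indices considered). *)

From mathcomp Require Import all_boot all_order all_algebra.
Set Implicit Arguments. Unset Strict Implicit. Unset Printing Implicit Defensive.
Import Order.TTheory GRing.Theory Num.Theory.
Local Open Scope ring_scope.

Section Defs.
Variables (R : realFieldType) (n : nat).
Notation mx := 'M[R]_n.

Definition frob (X Y : mx) : R := \tr (X^T *m Y).

Definition spd (A : mx) : Prop :=
  A^T = A /\ forall x : 'cV[R]_n, x != 0 -> 0 < (x^T *m A *m x) 0 0.

Definition in_span (k : nat) (V : 'I_k -> mx) (X : mx) : Prop :=
  exists c : 'I_k -> R, X = \sum_(j < k) c j *: V j.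

Definition lin_indep (k : nat) (V : 'I_k -> mx) : Prop :=
  forall c : 'I_k -> R, \sum_(j < k) c j *: V j = 0 -> forall j, c j = 0.

Definition mxpowmul (C : mx) (j : nat) (X : mx) : mx := iter j (mulmx C) X.

Definition krylov (C G0 : mx) (k : nat) (X : mx) : Prop :=
  in_span (fun j : 'I_k => mxpowmul C j G0) X.

Variables (A Pi : mx) (M : nat -> mx).

Definition Res (i : nat) : mx := 1%:M - A *m M i.
Definition Zs (i : nat) : mx := Pi *m Res i.
Definition Gs (i : nat) : mx := - (Pi *m A *m Zs i).

Definition beta (i : nat) : R := frob (Res i) (Gs i) / frob (Res i.-1) (Gs i.-1).

Fixpoint Ps (i : nat) : mx :=
  match i with
  | 0 => - Gs 0
  | i'.+1 => - Gs i'.+1 + beta i'.+1 *: Ps i'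
  end.

Definition alpha (i : nat) : R := - (frob (Res i) (Gs i) / frob (Ps i) (A *m Ps i)).

End Defs.

From mathcomp Require Import all_boot all_order all_algebra.
From mathcomp Require Import zify ring lra.
Set Implicit Arguments. Unset Strict Implicit. Unset Printing Implicit Defensive.
Import Order.TTheory GRing.Theory Num.Theory.
Local Open Scope ring_scope.

(* The Galerkin conditions determine M_i: two candidates differ by some D in
   K_i with A D orthogonal to K_i, so (D, A D) = 0 and D = 0.  It therefore
   suffices to check that M_i + alpha_i P_i satisfies the conditions at i+1,
   which is the classical conjugate gradient computation.  Since
   G_(j+1) = G_j + alpha_j (Pi A)^2 P_j and (G_j, A Y) = -(R_j, (Pi A)^2 Y),
   the vector P_(k+1) is A-orthogonal to P_k by the choice of beta_(k+1), and
   each later P_i stays A-orthogonal to P_k because (Pi A)^2 P_k lies in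
   K_(k+2), which is orthogonal to R_i.  As alpha_j <> 0, (Pi A)^2 P_j is
   recovered from G_(j+1) - G_j, so K_(i+1) is spanned by P_0, ..., P_i. *)

Section PrefixSpan.
Variables (R : realFieldType) (n : nat).
Local Notation mx := 'M[R]_n.
Implicit Types (X Y : mx) (f g : nat -> mx).

Definition in_prefix_span f i X := in_span (fun j : 'I_i => f j) X.

Lemma in_prefix_span0 f i : in_prefix_span f i 0.
Proof. by exists (fun=> 0); rewrite big1 // => j _; rewrite scale0r. Qed.

Lemma in_prefix_spanD f i X Y :
  in_prefix_span f i X -> in_prefix_span f i Y -> in_prefix_span f i (X + Y).
Proof.
move=> [c ->] [d ->]; exists (fun j => c j + d j); rewrite -big_split /=.
by apply: eq_bigr => j _; rewrite scalerDl.
Qed.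

Lemma in_prefix_spanZ f i a X :
  in_prefix_span f i X -> in_prefix_span f i (a *: X).
Proof.
move=> [c ->]; exists (fun j => a * c j); rewrite scaler_sumr.
by apply: eq_bigr => j _; rewrite scalerA.
Qed.

Lemma in_prefix_spanN f i X : in_prefix_span f i X -> in_prefix_span f i (- X).
Proof. by rewrite -scaleN1r; apply: in_prefix_spanZ. Qed.

Lemma in_prefix_spanB f i X Y :
  in_prefix_span f i X -> in_prefix_span f i Y -> in_prefix_span f i (X - Y).
Proof. by move=> hX /in_prefix_spanN; apply: in_prefix_spanD. Qed.

Lemma in_prefix_span_sum (I : Type) (r : seq I) (P : pred I) (F : I -> mx) f i :
  (forall k, P k -> in_prefix_span f i (F k)) ->
  in_prefix_span f i (\sum_(k <- r | P k) F k).
Proof.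
by apply: big_ind; [exact: in_prefix_span0 | exact: in_prefix_spanD].
Qed.

Lemma in_prefix_span_gen f i j : (j < i)%N -> in_prefix_span f i (f j).
Proof.
move=> ji; exists (fun k : 'I_i => (k == Ordinal ji)%:R).
rewrite (bigD1 (Ordinal ji)) //= eqxx scale1r big1 ?addr0 // => k /negbTE ->.
by rewrite scale0r.
Qed.

Lemma in_prefix_span_trans f g i i' X :
  (forall j, (j < i)%N -> in_prefix_span g i' (f j)) ->
  in_prefix_span f i X -> in_prefix_span g i' X.
Proof.
by move=> fg [c ->]; apply: in_prefix_span_sum => j _; apply/in_prefix_spanZ/fg.
Qed.

Lemma in_prefix_span_mull f g i i' (B : mx) X :
  (forall j, (j < i)%N -> in_prefix_span g i' (B *m f j)) ->
  in_prefix_span f i X -> in_prefix_span g i' (B *m X).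
Proof.
move=> Bfg [c ->]; rewrite mulmx_sumr; apply: in_prefix_span_sum => j _.
by rewrite -scalemxAr; apply/in_prefix_spanZ/Bfg.
Qed.

Lemma in_prefix_span_mono f i i' X :
  (i <= i')%N -> in_prefix_span f i X -> in_prefix_span f i' X.
Proof.
move=> ii'; apply: in_prefix_span_trans => j ji.
exact/in_prefix_span_gen/(leq_trans ji ii').
Qed.

Lemma in_prefix_span_nil f X : in_prefix_span f 0 X -> X = 0.
Proof. by move=> [c ->]; rewrite big_ord0. Qed.

Lemma krylov_mull (C G0 : mx) i X : krylov C G0 i X -> krylov C G0 i.+1 (C *m X).
Proof.
apply: in_prefix_span_mull => j ji.
exact: (@in_prefix_span_gen (fun j => mxpowmul C j G0) i.+1 j.+1).
Qed.

End PrefixSpan.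

Section Frobenius.
Variables (R : realFieldType) (n : nat).
Local Notation mx := 'M[R]_n.
Implicit Types (A B X Y Z : mx).

Lemma frobC X Y : frob X Y = frob Y X.
Proof. by rewrite /frob -mxtrace_tr trmx_mul trmxK. Qed.

Lemma frob0r X : frob X 0 = 0.
Proof. by rewrite /frob mulmx0 mxtrace0. Qed.

Lemma frobDr X Y Z : frob X (Y + Z) = frob X Y + frob X Z.
Proof. by rewrite /frob mulmxDr mxtraceD. Qed.

Lemma frobZr X a Y : frob X (a *: Y) = a * frob X Y.
Proof. by rewrite /frob -scalemxAr mxtraceZ. Qed.

Lemma frobNr X Y : frob X (- Y) = - frob X Y.
Proof. by rewrite -scaleN1r frobZr mulN1r. Qed.

Lemma frobBr X Y Z : frob X (Y - Z) = frob X Y - frob X Z.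
Proof. by rewrite frobDr frobNr. Qed.

Lemma frobDl X Y Z : frob (Y + Z) X = frob Y X + frob Z X.
Proof. by rewrite frobC frobDr -!(frobC X). Qed.

Lemma frobZl X a Y : frob (a *: Y) X = a * frob Y X.
Proof. by rewrite frobC frobZr frobC. Qed.

Lemma frobNl X Y : frob (- Y) X = - frob Y X.
Proof. by rewrite frobC frobNr frobC. Qed.

Lemma frobBl X Y Z : frob (Y - Z) X = frob Y X - frob Z X.
Proof. by rewrite frobDl frobNl. Qed.

Lemma frob_mull B X Y : frob (B *m X) Y = frob X (B^T *m Y).
Proof. by rewrite /frob trmx_mul mulmxA. Qed.

Lemma frob_mulmx_sym A X Y : A^T = A -> frob X (A *m Y) = frob Y (A *m X).
Proof. by move=> symA; rewrite frobC frob_mull symA. Qed.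

Lemma frob_sumr X (I : Type) (r : seq I) (P : pred I) (F : I -> mx) :
  frob X (\sum_(k <- r | P k) F k) = \sum_(k <- r | P k) frob X (F k).
Proof. exact: (big_morph (frob X) (frobDr X) (frob0r X)). Qed.

Lemma frob_prefix_span_eq0 Z (f : nat -> mx) i X :
  (forall j, (j < i)%N -> frob Z (f j) = 0) ->
  in_prefix_span f i X -> frob Z X = 0.
Proof.
by move=> Zf [c ->]; rewrite frob_sumr big1 // => j _; rewrite frobZr Zf ?mulr0.
Qed.

Lemma mulmx_tr_diag A X j :
  (X^T *m (A *m X)) j j = ((col j X)^T *m A *m col j X) 0 0.
Proof. by rewrite colE trmx_mul trmx_delta !mulmxA -rowE -!row_mul -colE !mxE. Qed.

Lemma col_neq0 X : X != 0 -> exists j, col j X != 0.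
Proof.
move=> X0; apply/existsP; apply: contraNT X0 => /existsPn X0.
by apply/eqP/matrixP => a b; have /negbNE/eqP/colP/(_ a) := X0 b; rewrite !mxE.
Qed.

Lemma spd_frob_gt0 A X : spd A -> X != 0 -> 0 < frob X (A *m X).
Proof.
move=> [_ posA] /col_neq0 [j Xj].
have rest : 0 <= \sum_(k < n | k != j) (X^T *m (A *m X)) k k.
  apply: sumr_ge0 => k _; rewrite mulmx_tr_diag.
  by case: (eqVneq (col k X) 0) => [->|Xk]; [rewrite mulmx0 mxE | exact/ltW/posA].
have := posA _ Xj; rewrite /frob /mxtrace (bigD1 j) //= mulmx_tr_diag; lra.
Qed.

Lemma Aorth_lin_indep A k (V : 'I_k -> mx) :
  spd A -> (forall j, V j != 0) ->
  (forall j l, j != l -> frob (V j) (A *m V l) = 0) -> lin_indep V.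
Proof.
move=> spdA V0 Aorth c sum0 l.
have : frob (A *m V l) (\sum_j c j *: V j) = 0 by rewrite sum0 frob0r.
rewrite frob_sumr (bigD1 l) //= big1 ?addr0 => [|j jl]; last first.
  by rewrite frobZr frobC Aorth ?mulr0.
rewrite frobZr frobC => /eqP; rewrite mulf_eq0 => /orP [/eqP //|].
by rewrite gt_eqF // spd_frob_gt0.
Qed.

End Frobenius.

Section ConjugateGradient.
Variables (R : realFieldType) (n : nat) (A Pi : 'M[R]_n) (M : nat -> 'M[R]_n).
Local Notation mx := 'M[R]_n.
Implicit Types (X Y : mx).
Local Notation T := ((Pi *m A) *m (Pi *m A)).
Local Notation G := (Gs A Pi M).
Local Notation P := (Ps A Pi M).
Local Notation Rs := (Res A M).
Local Notation alpha := (alpha A Pi M).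
Local Notation K := (fun j => mxpowmul T j (G 0)).

Lemma Gs_shift j k : G j = G k + T *m (M j - M k).
Proof.
rewrite /Gs /Zs /Res !mulmxBr !mulmxA mulmx1.
by rewrite !opprB [RHS]addrC subrKA.
Qed.

Lemma Gs_step j :
  M j.+1 = M j + alpha j *: P j -> G j.+1 = G j + alpha j *: (T *m P j).
Proof. by move=> Mj; rewrite (Gs_shift j.+1 j) Mj addrAC subrr add0r scalemxAr. Qed.

Lemma Ps_in_span_Gs j : in_prefix_span G j.+1 (P j).
Proof.
elim: j => [|j IH]; first exact/in_prefix_spanN/in_prefix_span_gen.
apply: in_prefix_spanD; first exact/in_prefix_spanN/in_prefix_span_gen.
exact/in_prefix_spanZ/(in_prefix_span_mono (leqnSn _) IH).
Qed.

Lemma Gs_in_span_Ps j : in_prefix_span P j.+1 (G j).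
Proof.
case: j => [|j].
  by rewrite -[G 0]opprK; apply/in_prefix_spanN/(in_prefix_span_gen P (ltnSn 0)).
have -> : G j.+1 = beta A Pi M j.+1 *: P j - P j.+1.
  by rewrite [P j.+1]/= opprD opprK addrC subrK.
apply: in_prefix_spanB; last exact: in_prefix_span_gen.
exact/in_prefix_spanZ/in_prefix_span_gen/ltnW.
Qed.

Hypothesis spdA : spd A.
Hypothesis spdPi : spd Pi.

Lemma frob_Gs_mull j Y : frob (G j) (A *m Y) = - frob (Rs j) (T *m Y).
Proof.
by rewrite /Gs /Zs frobNl !mulmxA frob_mull !trmx_mul spdA.1 spdPi.1 !mulmxA.
Qed.

Lemma frob_Res_Gs_lt0 j : Rs j != 0 -> frob (Rs j) (G j) < 0.
Proof.
move=> Rj; have PiRj : Pi *m Rs j != 0.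
  by apply: contraTneq (spd_frob_gt0 spdPi Rj) => ->; rewrite frob0r ltxx.
have := spd_frob_gt0 spdA PiRj; rewrite frob_mull spdPi.1 mulmxA.
by rewrite /Gs /Zs frobNr oppr_lt0.
Qed.

Hypothesis galerkin : forall i, (1 <= i)%N ->
  krylov T (G 0) i (M i - M 0) /\
  (forall X, krylov T (G 0) i X -> frob (Rs i) X = 0).

Lemma Ms_krylov j : in_prefix_span K j (M j - M 0).
Proof.
by case: j => [|j]; [rewrite subrr; exact: in_prefix_span0 | exact: (galerkin _).1].
Qed.

Lemma Res_orth_krylov j X : in_prefix_span K j X -> frob (Rs j) X = 0.
Proof.
case: j => [/in_prefix_span_nil ->|j]; first exact: frob0r.
exact: (galerkin _).2.
Qed.

Lemma Gs_krylov j : in_prefix_span K j.+1 (G j).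
Proof.
rewrite (Gs_shift j 0); apply: in_prefix_spanD.
  exact: (in_prefix_span_gen K (ltn0Sn j)).
exact/krylov_mull/Ms_krylov.
Qed.

Lemma Ps_krylov j : in_prefix_span K j.+1 (P j).
Proof.
elim: j => [|j IH]; first exact/in_prefix_spanN/Gs_krylov.
apply: in_prefix_spanD; first exact/in_prefix_spanN/Gs_krylov.
exact/in_prefix_spanZ/(in_prefix_span_mono (leqnSn _) IH).
Qed.

Lemma frob_Res_Ps j : frob (Rs j) (P j) = - frob (Rs j) (G j).
Proof.
case: j => [|j]; first exact: frobNr.
by rewrite frobDr frobNr frobZr (Res_orth_krylov (Ps_krylov j)) mulr0 addr0.
Qed.

Lemma Ms_galerkin_unique i X :
  in_prefix_span K i (X - M 0) ->
  (forall Y, in_prefix_span K i Y -> frob (1%:M - A *m X) Y = 0) -> M i = X.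
Proof.
move=> KX orthX; set D := M i - X.
have KD : in_prefix_span K i D.
  have -> : D = (M i - M 0) - (X - M 0) by rewrite opprB addrA subrK.
  exact: in_prefix_spanB (Ms_krylov i) KX.
have AD : A *m D = (1%:M - A *m X) - Rs i.
  by rewrite /Res mulmxBr opprB [RHS]addrC addrA subrK.
have DAD : frob D (A *m D) = 0.
  by rewrite AD frobBr !(frobC D) orthX // Res_orth_krylov // subrr.
apply/eqP; rewrite -subr_eq0 -/D; apply/negPn/negP => D0.
by have := spd_frob_gt0 spdA D0; rewrite DAD ltxx.
Qed.

Variable N : nat.
Hypothesis no_breakdown : forall i, (i <= N)%N -> Rs i != 0 /\ P i != 0.

Lemma alpha_neq0 m : (m <= N)%N -> alpha m != 0.
Proof.
move=> /no_breakdown [Rm Pm].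
rewrite /alpha oppr_eq0 mulf_neq0 ?invr_eq0 //.
  exact/ltr0_neq0/frob_Res_Gs_lt0.
exact/lt0r_neq0/spd_frob_gt0.
Qed.

Lemma mulT_Ps_in_span m :
  (m <= N)%N -> M m.+1 = M m + alpha m *: P m -> in_prefix_span P m.+2 (T *m P m).
Proof.
move=> mN Mm; have -> : T *m P m = (alpha m)^-1 *: (G m.+1 - G m).
  by rewrite (Gs_step Mm) addrAC subrr add0r scalerA mulVf ?scale1r ?alpha_neq0.
apply/in_prefix_spanZ/in_prefix_spanB; first exact: Gs_in_span_Ps.
exact: in_prefix_span_mono (Gs_in_span_Ps m).
Qed.

Lemma krylov_in_span_Ps i X :
  (i <= N.+1)%N -> (forall j, (j.+1 < i)%N -> M j.+1 = M j + alpha j *: P j) ->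
  in_prefix_span K i X -> in_prefix_span P i X.
Proof.
elim: i X => [|i IH] X iN Mstep.
  by move/in_prefix_span_nil ->; exact: in_prefix_span0.
have {}IH Y : in_prefix_span K i Y -> in_prefix_span P i Y.
  by apply: IH => [|j ji]; [lia | apply: Mstep; lia].
apply: in_prefix_span_trans => j; rewrite ltnS leq_eqVlt => /predU1P [->{j}|ji].
  case: i IH iN Mstep => [_ _ _|i IH iN Mstep]; first exact: Gs_in_span_Ps.
  change (in_prefix_span P i.+2 (T *m K i)).
  apply: (in_prefix_span_mull (f := P) (i := i.+1)) => [m mi|].
    by apply: in_prefix_span_mono (mulT_Ps_in_span _ (Mstep m _)); lia.
  exact/IH/in_prefix_span_gen.
exact/(in_prefix_span_mono (leqnSn i))/IH/in_prefix_span_gen.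
Qed.

Lemma Ps_Aorth k i :
  (k <= N)%N -> M k.+1 = M k + alpha k *: P k -> (k < i)%N ->
  frob (P i) (A *m P k) = 0.
Proof.
move=> kN Mk; elim: i => [//|i IH].
rewrite [P i.+1]/= frobDl frobNl frobZl frob_Gs_mull opprK ltnS leq_eqVlt.
case/predU1P => [<-{i IH}|ki].
  have [/frob_Res_Gs_lt0/ltr0_neq0 rho0 /(spd_frob_gt0 spdA)/lt0r_neq0 pi0] :=
    no_breakdown kN.
  have rho1 : frob (Rs k.+1) (G k.+1) = alpha k * frob (Rs k.+1) (T *m P k).
    by rewrite (Gs_step Mk) frobDr (Res_orth_krylov (Gs_krylov k)) add0r frobZr.
  by rewrite /beta /= rho1 /alpha; field; rewrite rho0 pi0.
rewrite (Res_orth_krylov (in_prefix_span_mono _ (krylov_mull (Ps_krylov k)))) //.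
by rewrite IH // mulr0 addr0.
Qed.

Lemma Ms_step_next i :
  (i <= N)%N -> (forall j, (j < i)%N -> M j.+1 = M j + alpha j *: P j) ->
  M i.+1 = M i + alpha i *: P i.
Proof.
move=> iN Mstep; apply: Ms_galerkin_unique.
  rewrite addrAC; apply: in_prefix_spanD; last exact/in_prefix_spanZ/Ps_krylov.
  exact: in_prefix_span_mono (leqnSn i) (Ms_krylov i).
have -> : 1%:M - A *m (M i + alpha i *: P i) = Rs i - alpha i *: (A *m P i).
  by rewrite /Res mulmxDr opprD addrA scalemxAr.
move=> Y KY; apply: (frob_prefix_span_eq0 _ (krylov_in_span_Ps _ _ KY)) => // k.
rewrite ltnS leq_eqVlt => /predU1P [->{k}|ki].
  have /(spd_frob_gt0 spdA)/lt0r_neq0 pi0 := (no_breakdown iN).2.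
  rewrite frobBl frobZl frob_Res_Ps [frob (A *m P i) _]frobC /alpha.
  by rewrite mulNr opprK divfK // addNr.
rewrite frobBl frobZl (Res_orth_krylov (in_prefix_span_mono ki (Ps_krylov k))).
have kN : (k <= N)%N by lia.
by rewrite frobC -frob_mulmx_sym ?spdA.1 // (Ps_Aorth kN (Mstep k ki) ki) mulr0 subr0.
Qed.

Lemma Ms_step i : (i <= N)%N -> M i.+1 = M i + alpha i *: P i.
Proof.
elim/ltn_ind: i => i IH iN; apply: Ms_step_next => // j ji.
by apply: IH; lia.
Qed.

Lemma Ps_Aorth_neq j k :
  (j <= N)%N -> (k <= N)%N -> j != k -> frob (P j) (A *m P k) = 0.
Proof.
move=> jN kN; rewrite neq_ltn => /orP [jk|kj]; last exact: Ps_Aorth (Ms_step kN) kj.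
by rewrite frob_mulmx_sym ?spdA.1 // (Ps_Aorth jN (Ms_step jN) jk).
Qed.

End ConjugateGradient.

Theorem proposition10 (R : realFieldType) (n : nat) (A Pi : 'M[R]_n)
  (M : nat -> 'M[R]_n) (N : nat) :
  spd A -> spd Pi ->
  (* M_i in M_0 + K_i((Pi A)^2, G_0) and R_i orthogonal to K_i((Pi A)^2, G_0), i >= 1 *)
  (forall i, (1 <= i)%N ->
     krylov ((Pi *m A) *m (Pi *m A)) (Gs A Pi M 0) i (M i - M 0) /\
     (forall X, krylov ((Pi *m A) *m (Pi *m A)) (Gs A Pi M 0) i X ->
        frob (Res A M i) X = 0)) ->
  (* no breakdown up to index N *)
  (forall i, (i <= N)%N -> Res A M i != 0 /\ Ps A Pi M i != 0) ->
  (forall i, (i <= N)%N ->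
     M i.+1 = M i + alpha A Pi M i *: Ps A Pi M i /\
     Res A M i.+1 = Res A M i - alpha A Pi M i *: (A *m Ps A Pi M i)) /\
  (forall i, (i <= N.+1)%N ->
     (forall j k : 'I_i, j != k ->
        frob (Ps A Pi M j) (A *m Ps A Pi M k) = 0) /\
     lin_indep (fun j : 'I_i => Ps A Pi M j) /\
     (forall X, in_span (fun j : 'I_i => Ps A Pi M j) X <->
                in_span (fun j : 'I_i => Gs A Pi M j) X) /\
     (forall X, in_span (fun j : 'I_i => Gs A Pi M j) X <->
                krylov ((Pi *m A) *m (Pi *m A)) (Gs A Pi M 0) i X)).
Proof.
move=> spdA spdPi galerkin no_breakdown.
have Mstep := Ms_step spdA spdPi galerkin no_breakdown.
split=> [i iN | i iN1].
  by split; rewrite /Res Mstep // mulmxDr scalemxAr opprD addrA.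
have leN (j : 'I_i) : (j <= N)%N by have := ltn_ord j; lia.
have Aorth (j k : 'I_i) : j != k -> frob (Ps A Pi M j) (A *m Ps A Pi M k) = 0.
  exact: (Ps_Aorth_neq spdA spdPi galerkin no_breakdown (leN j) (leN k)).
split=> //; split.
  by apply: Aorth_lin_indep Aorth => // j; apply: (no_breakdown _ (leN j)).2.
have PG X : in_prefix_span (Ps A Pi M) i X -> in_prefix_span (Gs A Pi M) i X.
  apply: in_prefix_span_trans => j ji.
  exact: in_prefix_span_mono ji (Ps_in_span_Gs _ _ _ j).
split=> X; split; [exact: PG | | | ].
- apply: in_prefix_span_trans => j ji.
  exact: in_prefix_span_mono ji (Gs_in_span_Ps _ _ _ j).
- apply: in_prefix_span_trans => j ji.
  exact: in_prefix_span_mono ji (Gs_krylov galerkin j).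
- move=> KX; apply/PG/(krylov_in_span_Ps spdA spdPi no_breakdown iN1 _ KX).
  by move=> j ji; apply: Mstep; lia.
Qed.
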